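(* Let $G=(V,E)$ be a finite simple graph on $n$ vertices. Let $G''$ be any graph with vertex set $V$ obtained as follows: for each vertex $v\in V$, if $v$ is not isolated, choose two distinct vertices of the closed neighborhood $N(v)\cup\{v\}$ (arbitrarily) and put the edge between them into $G''$; if $v$ is isolated, put a loop on $v$ into $G''$ (an edge already present is not duplicated). Then $$\gamma(G)\le n-\alpha(G'')=\beta(G'').$$
   Context: $N(v)$ denotes the set of neighbors of $v$ in $G$. A set $S\subseteq V$ is a dominating set of $G$ if every vertex of $V$ is in $S$ or has a neighbor in $S$; $\gamma(G)$ is the minimum size of a dominating set. For a graph $H$ possibly with loops, an independent set is a set of vertices containing no two endpoints of an edge and no vertex carrying a loop, and $\alpha(H)$ is the maximum size of an independent set; a vertex cover is a set of vertices meeting every edge (so it contains every vertex carrying a loop), and $\beta(H)$ is the minimum size of a vertex cover. *)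

From mathcomp Require Import all_boot.
Set Implicit Arguments. Unset Strict Implicit. Unset Printing Implicit Defensive.

Section Graphs.
Variable T : finType.

Definition simple_graph (e : rel T) : Prop := symmetric e /\ irreflexive e.

Definition nbhd (e : rel T) (v : T) : {set T} := [set u | e v u].
Definition cnbhd (e : rel T) (v : T) : {set T} := v |: nbhd e v.
Definition isolated (e : rel T) (v : T) : bool := nbhd e v == set0.

Definition dominating (e : rel T) (S : {set T}) : bool :=
  [forall v, (v \in S) || [exists u in S, e v u]].
(* gamma(G); setT is always dominating, so #|T| is a harmless default *)
Definition gamma (e : rel T) : nat :=
  \big[minn/#|T|]_(S : {set T} | dominating e S) #|S|.

(* For a graph H (possibly with loops) given by a symmetric relation h,
   h x x meaning that x carries a loop. *)
Definition independent (h : rel T) (S : {set T}) : bool :=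
  [forall x in S, forall y in S, ~~ h x y].
Definition vertex_cover (h : rel T) (S : {set T}) : bool :=
  [forall x, forall y, h x y ==> (x \in S) || (y \in S)].
Definition alpha (h : rel T) : nat :=
  \max_(S : {set T} | independent h S) #|S|.
Definition beta (h : rel T) : nat :=
  \big[minn/#|T|]_(S : {set T} | vertex_cover h S) #|S|.

Definition Gpp (e : rel T) (a b : T -> T) : rel T :=
  fun x y => [exists v,
    (~~ isolated e v && (((x == a v) && (y == b v)) || ((x == b v) && (y == a v))))
    || (isolated e v && (x == v) && (y == v))].

Definition valid_choice (e : rel T) (a b : T -> T) : Prop :=
  forall v, ~~ isolated e v ->
    [/\ a v != b v, a v \in cnbhd e v & b v \in cnbhd e v].

End Graphs.

(* Complementation exchanges independent sets and vertex covers of G'', so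
   beta(G'') = n - alpha(G''). A vertex cover S of G'' dominates G: an isolated
   vertex v carries a loop, so v is in S; otherwise the edge chosen for v joins
   two vertices of N(v) ∪ {v}, one of which lies in S and then dominates v. *)

From mathcomp Require Import all_boot order zify.
Import Order.TTheory.

Set Implicit Arguments.
Unset Strict Implicit.
Unset Printing Implicit Defensive.

Section VertexCoverComplement.
Variables (T : finType) (h : rel T).

Lemma vertex_coverC (S : {set T}) : vertex_cover h (~: S) = independent h S.
Proof.
apply/forallP/forall_inP => [cover x xS | indep x].
  apply/forall_inP => y yS; apply/negP => hxy.
  by move: (cover x) => /forallP/(_ y); rewrite hxy !inE xS yS.
apply/forallP => y; apply/implyP => hxy; rewrite !inE -negb_and.
apply/andP => -[xS yS].
by move: (indep x xS) => /forall_inP/(_ y yS); rewrite hxy.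
Qed.

Lemma independentC (S : {set T}) : independent h (~: S) = vertex_cover h S.
Proof. by rewrite -vertex_coverC setCK. Qed.

Lemma beta_alpha : beta h = #|T| - alpha h.
Proof.
have beta_le_co_independent S : independent h S -> beta h <= #|T| - #|S|.
  move=> indepS; rewrite -(cardsC S) addKn.
  by apply: (@bigmin_le_cond _ nat); rewrite vertex_coverC.
apply/eqP; rewrite eqn_leq; apply/andP; split.
  have alpha_le : alpha h <= #|T| - beta h.
    apply/bigmax_leqP => S indepS.
    have := beta_le_co_independent S indepS; have := max_card S; lia.
  have beta_le_card : beta h <= #|T| := @bigmin_le_id _ nat _ _ _ _ _.
  lia.
apply/(@bigmin_geP _ nat); split=> [|C coverC]; first exact: leq_subr.
have : #|~: C| <= alpha h by apply: leq_bigmax_cond; rewrite independentC.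
have := cardsC C; lia.
Qed.

End VertexCoverComplement.

Lemma gamma_le_beta (T : finType) (e h : rel T) :
  (forall S, vertex_cover h S -> dominating e S) -> gamma e <= beta h.
Proof.
move=> cover_dom; apply/(@bigmin_geP _ nat); split.
  by rewrite -cardsT; apply: (@bigmin_le_cond _ nat); apply/forallP => v; rewrite inE.
by move=> C /cover_dom domC; apply: (@bigmin_le_cond _ nat).
Qed.

Section ChosenEdgeGraph.
Variables (T : finType) (e : rel T) (a b : T -> T).

Lemma Gpp_loop v : isolated e v -> Gpp e a b v v.
Proof. by move=> iso_v; apply/existsP; exists v; rewrite iso_v !eqxx orbT. Qed.

Lemma Gpp_chosen v : ~~ isolated e v -> Gpp e a b (a v) (b v).
Proof. by move=> niso_v; apply/existsP; exists v; rewrite niso_v !eqxx. Qed.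

Lemma dominated_by_cnbhd (S : {set T}) v u :
  u \in cnbhd e v -> u \in S -> (v \in S) || [exists w in S, e v w].
Proof.
rewrite in_setU1 inE => /predU1P [-> -> //| evu uS].
by apply/orP; right; apply/existsP; exists u; rewrite uS.
Qed.

Lemma vertex_cover_Gpp_dominating (S : {set T}) :
  valid_choice e a b -> vertex_cover (Gpp e a b) S -> dominating e S.
Proof.
move=> valid /forallP cover; apply/forallP => v.
have [iso_v | niso_v] := boolP (isolated e v).
  by move: (cover v) => /forallP/(_ v)/implyP/(_ (Gpp_loop iso_v)); rewrite orbb => ->.
have [_ av bv] := valid v niso_v.
move: (cover (a v)) => /forallP/(_ (b v))/implyP/(_ (Gpp_chosen niso_v)).
by case/orP; [apply: dominated_by_cnbhd av | apply: dominated_by_cnbhd bv].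
Qed.

End ChosenEdgeGraph.

Theorem lemma2p3 (T : finType) (e : rel T) (a b : T -> T) :
  simple_graph e -> valid_choice e a b ->
  gamma e <= #|T| - alpha (Gpp e a b) /\
  #|T| - alpha (Gpp e a b) = beta (Gpp e a b).
Proof.
move=> _ valid; rewrite -beta_alpha; split=> //.
by apply: gamma_le_beta => S; apply: vertex_cover_Gpp_dominating.
Qed.
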